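(* Let $n$ be a positive integer and let $K$ and $L$ be number fields of degree $n$, both Galois over $\mathbb{Q}$, contained in a fixed algebraic closure of $\mathbb{Q}$. If $\delta_{K,L}>1-\frac{2}{n^2}$, then $K=L$.
   Context: $\widetilde E$ denotes the Galois closure of a number field $E$ over $\mathbb{Q}$ and $\widetilde K\widetilde L$ the compositum; $\delta_{K,L}:=\frac{2}{[\widetilde K\widetilde L:\mathbb{Q}]}+1-\frac{1}{[\widetilde K:\mathbb{Q}]}-\frac{1}{[\widetilde L:\mathbb{Q}]}$. *)

From HB Require Import structures.
From mathcomp Require Import all_boot all_order all_algebra all_fingroup all_field.
Set Implicit Arguments. Unset Strict Implicit. Unset Printing Implicit Defensive.
Import GRing.Theory Num.Theory.
Local Open Scope ring_scope.

(* Number fields are subfields K : {subfield L0} of a finite Galois (splitting)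
   extension L0 of Q; L0 plays the role of the fixed algebraic closure
   (any finitely many number fields and their Galois closures lie in one). *)

Definition gal_closure (L0 : splittingFieldType rat) (K : {subfield L0})
  : {vspace L0} :=
  agenv (\sum_(g in 'Gal({:L0} / 1%AS)%G) (g @: K))%VS.

Definition compositum (L0 : splittingFieldType rat) (U V : {vspace L0})
  : {vspace L0} := agenv (U + V)%VS.

Definition delta (L0 : splittingFieldType rat) (K L : {subfield L0}) : rat :=
  2 / (\dim (compositum (gal_closure K) (gal_closure L)))%:R + 1
  - 1 / (\dim (gal_closure K))%:R - 1 / (\dim (gal_closure L))%:R.

From HB Require Import structures.
From mathcomp Require Import all_boot all_order all_algebra all_fingroup all_field.
From mathcomp Require Import lra.
Set Implicit Arguments. Unset Strict Implicit. Unset Printing Implicit Defensive.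
Import Order.TTheory GRing.Theory Num.Theory.
Local Open Scope ring_scope.

(* Galois closures of Galois fields are the fields themselves, so delta K L
   only involves n and the degree c of the compositum KL.  If K <> L then KL
   is a field strictly containing K, whose degree is a multiple of n, hence
   c >= 2n; since also n >= 2, this gives delta K L <= 2/(2n) + 1 - 2/n
   = 1 - 1/n <= 1 - 2/n^2. *)

Lemma gal_closure_id (L0 : splittingFieldType rat) (K : {subfield L0}) :
  normalField 1%AS K -> gal_closure K = K.
Proof.
move=> nK; have gK g : g \in 'Gal({:L0} / 1%AS)%G -> (g @: K)%VS = K.
  rewrite gal_kAut ?sub1v // => /(normalField_kAut _ nK).
  by rewrite sub1v subvf => /(_ isT)/andP[_ /eqP].
rewrite /gal_closure; have -> : (\sum_(g in 'Gal({:L0} / 1%AS)%G) (g @: K))%VS = K.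
  apply/eqP; rewrite eqEsubv; apply/andP; split.
    by apply/subv_sumP => g /gK ->.
  by rewrite -{1}(gK 1%g) ?group1 //; apply: (sumv_sup 1%g); rewrite ?group1.
exact: subfield_closed.
Qed.

Lemma subv_composituml (L0 : splittingFieldType rat) (U V : {vspace L0}) :
  (U <= compositum U V)%VS.
Proof. exact: subv_trans (addvSl U V) (sub_agenv _). Qed.

Lemma subv_compositumr (L0 : splittingFieldType rat) (U V : {vspace L0}) :
  (V <= compositum U V)%VS.
Proof. exact: subv_trans (addvSr U V) (sub_agenv _). Qed.

Lemma subfield_dim1 (F : fieldType) (L0 : fieldExtType F) (K : {subfield L0}) :
  \dim K = 1%N -> K = 1%AS.
Proof.
by move=> dK; apply/val_inj/esym/eqP; rewrite /= eqEdim sub1v dimv1 dK.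
Qed.

Lemma subfield_eq_of_dim_lt_double (F : fieldType) (L0 : fieldExtType F)
    (M E : {subfield L0}) :
  (M <= E)%VS -> (\dim E < 2 * \dim M)%N -> M = E.
Proof.
move=> ME; have /dvdnP[k dE] := field_dimS ME.
have k_gt0 : (0 < k)%N by move: (adim_gt0 E); rewrite dE muln_gt0 => /andP[].
rewrite dE ltn_pmul2r ?adim_gt0 // => k_lt2.
have k1 : k = 1%N by case: k k_gt0 k_lt2 {dE} => [|[]].
by apply/val_inj/eqP; rewrite /= eqEdim ME dE k1 mul1n leqnn.
Qed.

Lemma compositum_dim_ge (L0 : splittingFieldType rat) (K L : {subfield L0}) :
  \dim K = \dim L -> K != L -> (2 * \dim K <= \dim (compositum K L))%N.
Proof.
move=> dKL; apply: contraNT; rewrite -ltnNge => small_C.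
have KC : K = <<K + L>>%AS.
  by apply: subfield_eq_of_dim_lt_double; first exact: subv_composituml.
have LC : L = <<K + L>>%AS.
  by apply: subfield_eq_of_dim_lt_double; rewrite -?dKL //; exact: subv_compositumr.
by rewrite -LC in KC; rewrite KC.
Qed.

Lemma delta_expr_le (R : realFieldType) (n c : nat) :
  (2 <= n)%N -> (2 * n <= c)%N ->
  2 / c%:R + 1 - 1 / n%:R - 1 / n%:R <= 1 - 2 / (n ^ 2)%:R :> R.
Proof.
rewrite -!(ler_nat R) natrM natrX => n_ge2 c_ge.
have n_gt0 : 0 < n%:R :> R by lra.
have c_gt0 : 0 < c%:R :> R by lra.
have inv_c : 2 / c%:R <= 1 / n%:R :> R.
  by rewrite ler_pdivrMr // mulrC mulrA ler_pdivlMr //; lra.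
suff : 2 / n%:R ^+ 2 <= 1 / n%:R :> R by lra.
by rewrite ler_pdivrMr ?exprn_gt0 // expr2 mul1r mulKf ?gt_eqF //; lra.
Qed.

Theorem theorem3p7 (L0 : splittingFieldType rat) (n : nat) (K L : {subfield L0}) :
  (0 < n)%N ->
  \dim K = n -> \dim L = n ->
  galois 1%AS K -> galois 1%AS L ->
  delta K L > 1 - 2 / (n ^ 2)%:R ->
  K = L.
Proof.
move=> _ dK dL /and3P[_ _ nK] /and3P[_ _ nL].
apply: contraTeq => neKL; rewrite -leNgt /delta !gal_closure_id // dK dL.
have n_ge2 : (2 <= n)%N.
  rewrite ltn_neqAle -dK adim_gt0 andbT; apply: contraNneq neKL => dK1.
  by rewrite (subfield_dim1 (esym dK1)) (@subfield_dim1 _ _ L) // dL -dK dK1.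
by apply: delta_expr_le; rewrite // -dK compositum_dim_ge ?dK ?dL.
Qed.
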